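(* Let $\{X_n\}_{n=-\infty}^{\infty}$ be a stationary time series taking values in a finite alphabet $\mathcal{X}$. For $k\ge1$, $n\ge0$ and $j\ge0$, define the time series $\{\tilde X^{(k,n,j)}_i\}_{i=-\infty}^{\infty}$ by $\tilde X^{(k,n,j)}_i=X_{n-\tau^k_j(n)+i}$ for $-\infty<i<\infty$. Then $\{\tilde X^{(k,n,j)}_i\}_{i=-\infty}^{\infty}$ has the same distribution as $\{X_i\}_{i=-\infty}^{\infty}$.
   Context: Notation: $X_m^n=(X_m,\dots,X_n)$. For $k\ge1$ and $n\ge0$, $\tau^k_0(n)=0$ and for $i\ge1$, $\tau^k_i(n)=\min\{t>\tau^k_{i-1}(n): X_{n-k+1-t}^{n-t}=X_{n-k+1}^n\}$, i.e. the successive times $t>0$ going backward at which the block $X_{n-k+1}^n$ reoccurs ending at position $n-t$. *)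

From HB Require Import structures.
From mathcomp Require Import all_boot all_order all_algebra.
From mathcomp Require Import all_classical all_reals.
From mathcomp Require Import ereal measure probability.
Set Implicit Arguments. Unset Strict Implicit. Unset Printing Implicit Defensive.
Import Order.TTheory GRing.Theory Num.Theory.
Local Open Scope classical_set_scope.
Local Open Scope ring_scope.

Section Defs.
Context {T : Type} {A : eqType}.

Definition cyl (X : int -> T -> A) (s : seq (int * A)) : set T :=
  [set w | all (fun p => X p.1 w == p.2) s].

Definition block_match (X : int -> T -> A) (k n t : nat) (w : T) : Prop :=
  forall l : nat, (l < k)%N ->
    X (n%:Z - t%:Z - l%:Z) w = X (n%:Z - l%:Z) w.

(* is_tau X k n w j t  <->  tau^k_j(n) = t at outcome w (recursive min definition) *)
Inductive is_tau (X : int -> T -> A) (k n : nat) (w : T) : nat -> nat -> Prop :=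
| is_tau0 : is_tau X k n w 0 0
| is_tauS (j s t : nat) :
    is_tau X k n w j s -> (s < t)%N -> block_match X k n t w ->
    (forall u : nat, (s < u)%N -> (u < t)%N -> ~ block_match X k n u w) ->
    is_tau X k n w j.+1 t.
End Defs.

Definition stationary (d : measure_display) (T : measurableType d) (R : realType)
  (P : probability T R) (A : eqType) (X : int -> T -> A) : Prop :=
  forall (s : seq (int * A)) (m : int),
    P (cyl (fun i => X (i + m)) s) = P (cyl X s).

From HB Require Import structures.
From mathcomp Require Import all_boot all_order all_algebra.
From mathcomp Require Import all_classical all_reals.
From mathcomp Require Import ereal sequences measure probability.
From mathcomp Require Import zify.
Import Order.TTheory GRing.Theory Num.Theory.
Set Implicit Arguments. Unset Strict Implicit. Unset Printing Implicit Defensive.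
Local Open Scope classical_set_scope.
Local Open Scope ring_scope.

(* Return times are handled by counting: tau^k_j(n) = t exactly when t is a
   return lag of the block ending at n and exactly j of the lags 1, ..., t are
   return lags.  Let E_t ([tau_event t]) be the event that tau^k_j(n) = t and
   X_{n-t+.} lies in the cylinder.  The E_t are disjoint, and by stationarity
   E_t has the probability of its shift by t, the event F_t
   ([shifted_tau_event t]) that n + t is the j-th forward return of the block
   ending at n and X_{n+.} lies in the cylinder.  The F_t are disjoint too, and
   by Poincare recurrence almost every block returns j times in the future, so
   the F_t cover the cylinder at n up to a null set.  Hence
   P(U E_t) = sum P(E_t) = sum P(F_t) = P(X_{n+.} in s) = P(X in s). *)

Section SameBlock.
Variables (A : eqType) (k : nat).
Implicit Types (p : int -> A) (m : int).

Definition same_block p a b : bool :=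
  all (fun l : nat => p (a - l%:Z) == p (b - l%:Z)) (iota 0 k).

Lemma same_blockP p a b :
  reflect (forall l : nat, (l < k)%N -> p (a - l%:Z) = p (b - l%:Z))
          (same_block p a b).
Proof.
apply: (iffP allP) => H l; first by move=> lk; apply/eqP/H; rewrite mem_iota.
by rewrite mem_iota add0n => /andP[_ lk]; apply/eqP/H.
Qed.

Lemma same_blockC p a b : same_block p a b = same_block p b a.
Proof. by apply/same_blockP/same_blockP => H l lk; rewrite H. Qed.

Lemma same_block_transr p a b c :
  same_block p b c -> same_block p a b = same_block p a c.
Proof.
by move/same_blockP=> H; apply/same_blockP/same_blockP => H' l lk;
  rewrite H' // H.
Qed.

Lemma same_block_trans p a b c :
  same_block p a b -> same_block p b c -> same_block p a c.
Proof. by move=> ab bc; rewrite -(same_block_transr a bc). Qed.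

Lemma same_block_shift p m a b :
  same_block (fun z => p (z + m)) a b = same_block p (a + m) (b + m).
Proof. by apply: eq_all => l /=; rewrite !(addrAC _ (- _)). Qed.

Definition nreturns p m (t : nat) : nat :=
  count (fun u : nat => same_block p (m - u%:Z) m) (iota 1 t).

Lemma nreturns_cat p m a b : nreturns p m (a + b) =
  (nreturns p m a + count (fun u : nat => same_block p (m - u%:Z) m)
                          (iota a.+1 b))%N.
Proof. by rewrite /nreturns iotaD count_cat add1n. Qed.

Lemma nreturnsS p m t :
  nreturns p m t.+1 = (nreturns p m t + same_block p (m - t.+1%:Z) m)%N.
Proof. by rewrite -addn1 nreturns_cat /= addn0 addn1. Qed.

Lemma nreturnsD p m a b : same_block p (m - a%:Z) m ->
  nreturns p m (a + b) = (nreturns p m a + nreturns p (m - a%:Z) b)%N.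
Proof.
move=> ma; rewrite nreturns_cat; congr (_ + _)%N.
rewrite -addn1 iotaDl count_map; apply: eq_count => v /=.
by rewrite (same_block_transr _ ma) PoszD opprD addrA.
Qed.

Lemma nreturns_gt0 p m (a : nat) :
  (0 < a)%N -> same_block p (m - a%:Z) m -> (0 < nreturns p m a)%N.
Proof.
move=> a0 ma; rewrite -has_count; apply/hasP; exists a => //.
by rewrite mem_iota; lia.
Qed.

End SameBlock.

Definition traj (T A : Type) (X : int -> T -> A) (w : T) : int -> A :=
  fun i => X i w.

(* the coordinate process on the path space, so that [is_tau] applies to paths *)
Definition eval_path {A : Type} (i : int) (p : int -> A) : A := p i.

Lemma is_tau_ext (T T' : Type) (A : eqType) (X : int -> T -> A) (Y : int -> T' -> A)
    k m m' w w' j t :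
  (forall u, (u <= t)%N ->
     block_match X k m u w <-> block_match Y k m' u w') ->
  is_tau X k m w j t -> is_tau Y k m' w' j t.
Proof.
move=> H Ht; elim: Ht H => [|i s t' _ IH st bm nm] H; first exact: is_tau0.
apply: is_tauS (st) _ _.
- by apply: IH => u us; apply: H; apply: leq_trans us (ltnW st).
- exact/(H t' (leqnn _)).
- by move=> u su ut /(H u (ltnW ut)); apply: nm.
Qed.

Section ReturnTimes.
Variables (T : Type) (A : eqType) (X : int -> T -> A) (k : nat).

Lemma block_matchE (m : nat) t w :
  block_match X k m t w <-> same_block k (traj X w) (m%:Z - t%:Z) m.
Proof. by split => [H|/same_blockP H]; [apply/same_blockP|]. Qed.

Lemma is_tau_traj m w j t :
  is_tau X k m w j t <-> is_tau eval_path k m (traj X w) j t.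
Proof. by split; apply: is_tau_ext. Qed.

Lemma is_tau_nreturns (m : nat) w j t : is_tau X k m w j t ->
  nreturns k (traj X w) m t = j /\
  (t = 0%N \/ same_block k (traj X w) (m%:Z - t%:Z) m).
Proof.
elim=> [|i s t' _ [IH _] st /block_matchE bm nm]; first by split; [|left].
split; last by right.
have [e t'E] : exists e, t' = (s + e).+1 by exists (t' - s).-1; lia.
rewrite t'E nreturnsS -t'E bm nreturns_cat IH addn1; congr _.+1; apply/eqP.
rewrite -{2}[i]addn0 eqn_add2l eqn0Ngt -has_count; apply/hasP => -[u].
by rewrite mem_iota => /andP[su ut] /block_matchE; apply: nm; lia.
Qed.

Lemma is_tau_last_return (m : nat) w t : exists2 s, (s <= t)%N &
  is_tau X k m w (nreturns k (traj X w) m t) s /\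
  forall u, (s < u <= t)%N -> ~~ same_block k (traj X w) (m%:Z - u%:Z) m.
Proof.
elim: t => [|t [s st [Hs nm]]].
  by exists 0%N => //; split; [exact: is_tau0|lia].
rewrite nreturnsS; have [mt|nmt] := boolP (same_block _ _ _ _).
  exists t.+1 => //; split; last by lia.
  rewrite addn1; apply: is_tauS Hs _ _ _; [by []|exact/block_matchE|].
  by move=> u su ut /block_matchE; apply/negP/nm; lia.
exists s; first lia.
rewrite addn0; split => // u /andP[su]; rewrite leq_eqVlt => /orP[/eqP->//|].
by rewrite ltnS => ut; apply: nm; rewrite su.
Qed.

Lemma is_tauP (m : nat) w j t : is_tau X k m w j t <->
  nreturns k (traj X w) m t = j /\
  (t = 0%N \/ same_block k (traj X w) (m%:Z - t%:Z) m).
Proof.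
split; first exact: is_tau_nreturns.
move=> [<- mt]; have [s st [Hs nm]] := is_tau_last_return m w t.
have [e|lt_st] : s = t \/ (s < t)%N by lia.
  by subst.
case: mt => [t0|mt]; first lia.
by move: (nm t); rewrite lt_st leqnn mt => /(_ isT).
Qed.

Lemma is_tau_inj (m : nat) w j t t' :
  is_tau X k m w j t -> is_tau X k m w j t' -> t = t'.
Proof.
wlog tt' : t t' / (t <= t')%N.
  by move=> H H1 H2; have [/H|/ltnW/H] := leqP t t'; [apply|move=> /(_ H2 H1)].
move=> /is_tauP[Ct _] /is_tauP[Ct' [t0|mt']]; first lia.
have [//|lt] : t = t' \/ (t < t')%N by lia.
move: Ct'; rewrite -(subnKC tt') nreturns_cat Ct => /eqP.
rewrite -{2}[j]addn0 eqn_add2l eqn0Ngt -has_count => /negP[].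
by apply/hasP; exists t'; rewrite ?subnKC // mem_iota; lia.
Qed.

Lemma is_tau_fwdP (m t : nat) w j : is_tau X k (m + t) w j t <->
  nreturns k (traj X w) (m%:Z + t%:Z) t = j /\
  (t = 0%N \/ same_block k (traj X w) m (m%:Z + t%:Z)).
Proof. by rewrite is_tauP PoszD addrK. Qed.

Lemma is_tau_fwd_inj (m : nat) w j t t' :
  is_tau X k (m + t) w j t -> is_tau X k (m + t') w j t' -> t = t'.
Proof.
wlog tt' : t t' / (t <= t')%N.
  by move=> H H1 H2; have [/H|/ltnW/H] := leqP t t'; [apply|move=> /(_ H2 H1)].
move=> /is_tau_fwdP[Ct mt] /is_tau_fwdP[Ct' [t0|mt']]; first lia.
have [//|lt] : t = t' \/ (t < t')%N by lia.
have E : m%:Z + t'%:Z - (t' - t)%N%:Z = m%:Z + t%:Z by lia.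
have ret : same_block k (traj X w) (m%:Z + t%:Z) (m%:Z + t'%:Z).
  case: mt => [t0|mt]; first by rewrite t0 addr0.
  by rewrite -(same_block_transr _ mt') same_blockC.
rewrite -E in ret; have := nreturns_gt0 _ ret; rewrite subn_gt0 => /(_ lt).
by have := nreturnsD t ret; rewrite E subnK // Ct Ct'; lia.
Qed.

Lemma is_tau_first_return (m v : nat) w : (0 < v)%N ->
  same_block k (traj X w) m (m%:Z + v%:Z) ->
  (forall u, (0 < u < v)%N -> ~~ same_block k (traj X w) m (m%:Z + u%:Z)) ->
  is_tau X k (m + v) w 1%N v.
Proof.
move=> v0 ret first; apply: is_tauS (is_tau0 _ _ _ _) v0 _ _.
  by apply/block_matchE; rewrite PoszD addrK.
move=> u u0 uv /block_matchE; apply/negP; rewrite PoszD.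
rewrite (_ : _ - _ = m%:Z + (v - u)%N%:Z); last by lia.
by rewrite -(same_block_transr _ ret) same_blockC; apply: first; lia.
Qed.

Lemma is_tau_fwd_add (m t u : nat) w j :
  is_tau X k (m + t) w j t -> is_tau X k (m + t + u) w 1%N u ->
  is_tau X k (m + (t + u)) w j.+1 (t + u).
Proof.
move=> /is_tau_fwdP[Ct rt] /is_tau_fwdP[Cu [u0|ru]]; first by move: Cu; rewrite u0.
rewrite PoszD in Cu ru.
apply/is_tau_fwdP; rewrite !PoszD addrA addnC nreturnsD; last by rewrite addrK.
rewrite addrK Cu Ct; split => //; right.
by case: rt => [t0|rt]; [move: ru; rewrite t0 addr0|apply: same_block_trans rt ru].
Qed.

End ReturnTimes.

Lemma is_tau_shift (A : eqType) k (p : int -> A) (n m : nat) j t :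
  is_tau eval_path k n (fun i => p (i + m%:Z)) j t <-> is_tau eval_path k (n + m) p j t.
Proof.
by split; apply: is_tau_ext => u _;
  rewrite !block_matchE same_block_shift PoszD addrAC.
Qed.

Lemma natmul_bounded_eq0 (R : realType) (x : \bar R) :
  (0 <= x)%E -> (forall M : nat, (x *+ M.+1 <= 1)%E) -> x = 0%E.
Proof.
move=> x0 H; have fx : x \is a fin_num.
  by rewrite ge0_fin_numE //; apply: le_lt_trans (H 0%N) _; exact: ltey.
rewrite -(fineK fx) in x0 H *; move: (fine x) x0 H => r; rewrite lee_fin => r0 H.
congr (_%:E); apply/eqP; rewrite eq_le r0 andbT leNgt; apply/negP => rp.
have := H (Num.Def.archi_bound r^-1); rewrite -EFin_natmul lee_fin.
apply/negP; rewrite -ltNge -mulr_natr -[X in X < _](mulfV (lt0r_neq0 rp)).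
rewrite ltr_pM2l //; apply: lt_le_trans (archi_boundP _) _; first by rewrite invr_ge0 ltW.
by rewrite ler_nat.
Qed.

Lemma negligible_fin_bigcup d (T : measurableType d) (R : realType)
    (mu : {measure set T -> \bar R}) (I : finType) (F : I -> set T) :
  (forall i, mu.-negligible (F i)) -> mu.-negligible (\bigcup_i F i).
Proof.
move=> nF; have -> : \bigcup_i F i = \big[setU/set0]_(i <- enum I) F i.
  by rewrite -bigcup_seq; apply: eq_bigcupl; split => i //= _; rewrite mem_enum.
by elim/big_ind: _ => [|B C|i _]; [exact: negligible_set0|exact: negligibleU|].
Qed.

Lemma measure_bigcup_congr d (T : measurableType d) (R : realType)
    (mu : {measure set T -> \bar R}) (F G : nat -> set T) :
  (forall t, measurable (F t)) -> (forall t, measurable (G t)) ->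
  trivIset setT F -> trivIset setT G -> (forall t, mu (F t) = mu (G t)) ->
  mu (\bigcup_t F t) = mu (\bigcup_t G t).
Proof.
move=> mF mG tF tG FG; rewrite !(measure_bigcup _ setT) //.
by apply: eq_eseriesr => t _; exact: FG.
Qed.

Lemma measure_negligibleD d (T : measurableType d) (R : realType)
    (mu : {measure set T -> \bar R}) (A B : set T) :
  measurable A -> measurable B -> A `<=` B -> mu.-negligible (B `\` A) ->
  mu A = mu B.
Proof.
move=> mA mB AB nBA; have mBA : measurable (B `\` A) by exact: measurableD.
by rewrite -[in RHS](setDUK AB) measureU ?setDIK // (measure_negligible mBA nBA) adde0.
Qed.

Section Window.
Variable A : Type.

Definition window (a : int) (L : nat) (p : int -> A) : {ffun 'I_L -> A} :=
  [ffun i : 'I_L => p (a + (i : nat)%:Z)].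

Definition local (a : int) (L : nat) (Q : (int -> A) -> Prop) :=
  forall p q, (forall z, a <= z < a + L%:Z -> p z = q z) -> Q p -> Q q.

Lemma window_eq_agree a L p q : window a L p = window a L q ->
  forall z, a <= z < a + L%:Z -> p z = q z.
Proof.
move=> /ffunP E z /andP[az zL]; have zaL : (`|z - a| < L)%N by lia.
have := E (Ordinal zaL); rewrite !ffunE /=.
by rewrite gez0_abs ?subr_ge0 // addrCA subrr addr0.
Qed.

End Window.

Lemma measurable_cyl d (T : measurableType d) (A : eqType) (Y : int -> T -> A)
    (hY : forall i a, measurable (Y i @^-1` [set a])) s :
  measurable (cyl Y s).
Proof.
elim: s => [|[i a] s IH]; first by rewrite [cyl _ _](_ : _ = setT) //; exact/seteqP.
rewrite [cyl _ _](_ : _ = Y i @^-1` [set a] `&` cyl Y s); first exact: measurableI.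
apply/seteqP; split => w; rewrite /cyl /=; first by case/andP => /eqP.
by case=> -> ->; rewrite eqxx.
Qed.

Section LocalEvents.
Variables (d : measure_display) (T : measurableType d) (A : finType).
Variables (Y : int -> T -> A) (a : int) (L : nat).
Hypothesis hY : forall i a, measurable (Y i @^-1` [set a]).

Definition window_cyl (f : {ffun 'I_L -> A}) : seq (int * A) :=
  [seq (a + (nat_of_ord i)%:Z, f i) | i <- enum 'I_L].

Lemma cyl_window f : cyl Y (window_cyl f) = [set w | window a L (traj Y w) = f].
Proof.
rewrite /cyl /window_cyl; apply/seteqP; split => w /=; rewrite all_map.
  by move=> /allP H; apply/ffunP => i; rewrite ffunE; apply/eqP/(H i); rewrite mem_enum.
by move=> <-; apply/allP => i _ /=; rewrite ffunE.
Qed.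

Lemma local_event_cyl Q : local a L Q ->
  [set w | Q (traj Y w)] = \bigcup_(f in window a L @` Q) cyl Y (window_cyl f).
Proof.
move=> hQ; apply/seteqP; split => w /=.
  by move=> Qw; exists (window a L (traj Y w)); [exists (traj Y w)|rewrite cyl_window].
move=> [_ [p Qp <-]]; rewrite cyl_window /= => /esym /window_eq_agree agree.
exact: hQ agree Qp.
Qed.

Lemma trivIset_cyl_window (D : set {ffun 'I_L -> A}) :
  trivIset D (fun f => cyl Y (window_cyl f)).
Proof. by move=> f g _ _ [w []]; rewrite !cyl_window /= => <- <-. Qed.

Lemma measurable_local Q : local a L Q -> measurable [set w | Q (traj Y w)].
Proof.
move=> /local_event_cyl ->; apply: fin_bigcup_measurable; first exact: finite_finset.
by move=> f _; apply: measurable_cyl.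
Qed.

Lemma measure_local (R : realType) (mu : {measure set T -> \bar R}) Q :
  local a L Q -> mu [set w | Q (traj Y w)] =
    (\sum_(f \in window a L @` Q) mu (cyl Y (window_cyl f)))%E.
Proof.
move=> /local_event_cyl ->; rewrite measure_fin_bigcup //.
- exact: finite_finset.
- exact: trivIset_cyl_window.
- by move=> f _; apply: measurable_cyl.
Qed.

End LocalEvents.

Lemma stationary_local d (T : measurableType d) (R : realType)
    (P : probability T R) (A : finType) (X : int -> T -> A)
    (hX : forall i a, measurable (X i @^-1` [set a])) (hstat : stationary P X)
    a L Q (m : int) :
  local a L Q ->
  P [set w | Q (traj (fun i => X (i + m)) w)] = P [set w | Q (traj X w)].
Proof.
move=> hQ; rewrite (measure_local _ _ hQ) ?(measure_local _ _ hQ) //.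
by apply: eq_fsbigr => f _; apply: hstat.
Qed.

Section Recurrence.
Variable (A : finType) (k : nat).

Definition block_at (p : int -> A) (m : int) : {ffun 'I_k -> A} :=
  [ffun l : 'I_k => p (m - (nat_of_ord l)%:Z)].

Lemma same_block_at p a b : same_block k p a b = (block_at p a == block_at p b).
Proof.
apply/same_blockP/eqP => [H|/ffunP H l lk]; first by apply/ffunP => l; rewrite !ffunE H.
by have := H (Ordinal lk); rewrite !ffunE.
Qed.

Lemma block_at_shift p m : block_at (fun z => p (z + m)) 0 = block_at p m.
Proof. by apply/ffunP => l; rewrite !ffunE add0r addrC. Qed.

Definition no_return_upto (b : {ffun 'I_k -> A}) (M : nat) (p : int -> A) :=
  block_at p 0 = b /\ forall u : nat, (0 < u <= M)%N -> ~~ same_block k p 0 u%:Z.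

Lemma local_no_return_upto b M : local (- k%:Z) (k + M + 1) (no_return_upto b M).
Proof.
move=> p q agree [<- nr]; split.
  by apply/ffunP => l; rewrite !ffunE agree //; have := ltn_ord l; lia.
move=> u uM; apply: contra (nr u uM) => /same_blockP H; apply/same_blockP => l lk.
by rewrite !agree ?H //; lia.
Qed.

Lemma no_return_upto_shift_disjoint b M p (i j : nat) : (i < j <= M)%N ->
  no_return_upto b M (fun z => p (z + i%:Z)) ->
  ~ no_return_upto b M (fun z => p (z + j%:Z)).
Proof.
move=> /andP[ij jM] [bi nr] [bj _]; have /negP[] := nr (j - i)%N ltac:(lia).
rewrite same_block_shift add0r -PoszD subnK ?(ltnW ij) // same_block_at.
by rewrite -(block_at_shift p i) -(block_at_shift p j) bi bj.
Qed.

Variables (d : measure_display) (T : measurableType d) (R : realType).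
Variables (P : probability T R) (X : int -> T -> A).
Hypotheses (hX : forall i a, measurable (X i @^-1` [set a]))
  (hstat : stationary P X).

Lemma negligible_no_return b (m : int) : P.-negligible
  (\bigcap_M [set w | no_return_upto b M (traj (fun z => X (z + m)) w)]).
Proof.
have mE M (m' : int) :
    measurable [set w | no_return_upto b M (traj (fun z => X (z + m')) w)].
  by apply: (measurable_local _ (@local_no_return_upto b M)) => i; apply: hX.
set Z := \bigcap_M _; set F := fun (M i : nat) =>
  [set w | no_return_upto b M (traj (fun z => X (z + i%:Z)) w)].
have mZ : measurable Z by apply: bigcapT_measurable => M.
(* the F M i, i <= M, are disjoint and each is at least as likely as Z *)
apply/negligibleP => //; apply: natmul_bounded_eq0 => // M.
have PF i : P (F M i) = P [set w | no_return_upto b M (traj X w)].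
  exact: stationary_local (@local_no_return_upto b M).
have PZ i : (P Z <= P (F M i))%E.
  rewrite PF -(stationary_local hX hstat m (@local_no_return_upto b M)).
  by apply: le_measure; rewrite ?inE // => w /(_ M I).
have tF : trivIset `I_M.+1 (F M).
  move=> i j /= iM jM [w [Fi Fj]]; have [ij|ji|//] := ltngtP i j.
    by case: (no_return_upto_shift_disjoint (p := traj X w) _ Fi Fj); lia.
  by case: (no_return_upto_shift_disjoint (p := traj X w) _ Fj Fi); lia.
have mU : measurable (\big[setU/set0]_(i < M.+1) F M i).
  by apply: bigsetU_measurable => i _; apply: mE.
apply: le_trans (probability_le1 P mU).
rewrite measure_semi_additive_ord_I //; last by move=> i _; apply: mE.
have -> : (P Z *+ M.+1 = \sum_(i < M.+1) P Z)%E by rewrite sumr_const card_ord.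
by apply: lee_sum => i _; apply: PZ.
Qed.

End Recurrence.

Section ForwardReturns.
Variables (d : measure_display) (T : measurableType d) (R : realType).
Variables (P : probability T R) (A : finType) (X : int -> T -> A).
Hypotheses (hX : forall i a, measurable (X i @^-1` [set a]))
  (hstat : stationary P X).
Variable k : nat.

Lemma negligible_never_returns (m : int) : P.-negligible
  [set w | forall u : nat, (0 < u)%N -> ~~ same_block k (traj X w) m (m + u%:Z)].
Proof.
apply: negligibleS (negligible_fin_bigcup (fun b => negligible_no_return hX hstat b m)).
move=> w nr; exists (block_at k (traj X w) m) => // M _; split; first exact: block_at_shift.
by move=> u /andP[u0 _]; rewrite (same_block_shift _ (traj X w)) add0r (addrC u%:Z); apply: nr.
Qed.

Lemma negligible_no_first_return (m : nat) :
  P.-negligible [set w | ~ exists t : nat, is_tau X k (m + t) w 1%N t].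
Proof.
apply: negligibleS (negligible_never_returns m) => w nr u u0.
apply/negP => ret; apply: nr.
have ex_ret : exists v, (0 < v)%N && same_block k (traj X w) m (m%:Z + v%:Z).
  by exists u; rewrite u0.
case: (ex_minnP ex_ret) => v /andP[v0 rv] vmin; exists v.
apply: is_tau_first_return => // x /andP[x0 xv]; apply/negP => rx.
by have := vmin x; rewrite x0 rx => /(_ isT); lia.
Qed.

Lemma negligible_no_fwd_return j (m : nat) :
  P.-negligible [set w | ~ exists t : nat, is_tau X k (m + t) w j t].
Proof.
elim: j m => [|j IH] m.
  apply: negligibleS (negligible_set0 P) => w /= []; exists 0%N.
  by rewrite addn0; exact: is_tau0.
apply: negligibleS (negligibleU (IH m)
  (negligible_bigcup (fun t => negligible_no_first_return (m + t)))).
move=> w nr; have [[t Ht]|] := pselect (exists t, is_tau X k (m + t) w j t); last by left.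
right; exists t => //= -[u Hu]; apply: nr; exists (t + u)%N.
exact: is_tau_fwd_add Ht Hu.
Qed.

End ForwardReturns.

Definition cyl_radius (A : eqType) (s : seq (int * A)) : nat :=
  \max_(q <- s) `|q.1|%N.

Definition tau_cyl (A : eqType) (k n j t : nat) (s : seq (int * A)) (p : int -> A) :=
  is_tau eval_path k n p j t /\ cyl (fun i (q : int -> A) => q (n%:Z - t%:Z + i)) s p.

Lemma local_tau_cyl (A : eqType) k n j t (s : seq (int * A)) :
  local (n%:Z - t%:Z - k%:Z - (cyl_radius s)%:Z) (t + k + 2 * cyl_radius s + 1)
        (tau_cyl k n j t s).
Proof.
set r := cyl_radius s; move=> p q agree [tau cy].
have pq z : n%:Z - t%:Z - k%:Z - r%:Z <= z <= n%:Z + r%:Z -> p z = q z.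
  by move=> /andP[lo hi]; apply: agree; lia.
split.
  apply: is_tau_ext tau => u ut; rewrite /block_match /eval_path.
  by split => H l lk; [rewrite -!pq ?H|rewrite !pq ?H] => //; lia.
apply/allP => x xs; have := allP cy x xs; rewrite /= pq //.
have : (`|x.1| <= r)%N by apply: leq_bigmax_seq xs _.
case: x xs => y a _ /=; clearbody r; lia.
Qed.

Section ShiftedTau.
Variables (d : measure_display) (T : measurableType d) (R : realType).
Variables (P : probability T R) (A : finType) (X : int -> T -> A).
Hypotheses (hX : forall i a, measurable (X i @^-1` [set a]))
  (hstat : stationary P X).
Variables (k n j : nat) (s : seq (int * A)).

Definition tau_event (t : nat) := [set w | tau_cyl k n j t s (traj X w)].

Definition shifted_tau_event (t : nat) :=
  [set w | tau_cyl k n j t s (traj (fun i => X (i + t%:Z)) w)].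

Lemma bigcup_tau_event : [set w | exists t : nat, is_tau X k n w j t /\
    cyl (fun i => X (n%:Z - t%:Z + i)) s w] = \bigcup_t tau_event t.
Proof.
apply/seteqP; split => w [t]; first by move=> [/is_tau_traj tau cy]; exists t.
by move=> _ [tau cy]; exists t; split => //; apply/is_tau_traj.
Qed.

Lemma measurable_tau_event t : measurable (tau_event t).
Proof. by apply: (measurable_local hX); exact: local_tau_cyl. Qed.

Lemma measurable_shifted_tau_event t : measurable (shifted_tau_event t).
Proof.
apply: measurable_local; last exact: local_tau_cyl.
by move=> i; apply: hX.
Qed.

Lemma measure_shifted_tau_event t : P (shifted_tau_event t) = P (tau_event t).
Proof. by apply: (stationary_local hX hstat); exact: local_tau_cyl. Qed.

Lemma shifted_tau_eventE t : shifted_tau_event t =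
  [set w | is_tau X k (n + t) w j t /\ cyl (fun i => X (n%:Z + i)) s w].
Proof.
have cylE w : cyl (fun i (q : int -> A) => q (n%:Z - t%:Z + i)) s
    (traj (fun i => X (i + t%:Z)) w) = cyl (fun i => X (n%:Z + i)) s w.
  by rewrite /cyl /traj /=; under eq_all do rewrite addrAC subrK.
apply/seteqP; split => w [tau cy]; split; rewrite ?cylE // in cy *.
  by apply/is_tau_traj/(is_tau_shift k (traj X w)).
by apply/(is_tau_shift k (traj X w)); move/is_tau_traj: tau.
Qed.

Lemma trivIset_tau_event : trivIset setT tau_event.
Proof. by move=> t t' _ _ [w [[tau _] [tau' _]]]; apply: is_tau_inj tau tau'. Qed.

Lemma trivIset_shifted_tau_event : trivIset setT shifted_tau_event.
Proof.
move=> t t' _ _ [w []]; rewrite !shifted_tau_eventE => -[tau _] [tau' _].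
exact: is_tau_fwd_inj tau tau'.
Qed.

Lemma measure_bigcup_shifted_tau_event :
  P (\bigcup_t shifted_tau_event t) = P (cyl (fun i => X (n%:Z + i)) s).
Proof.
apply: measure_negligibleD.
- exact: bigcupT_measurable measurable_shifted_tau_event.
- by apply: measurable_cyl => i; apply: hX.
- by move=> w [t _]; rewrite shifted_tau_eventE => -[].
apply: negligibleS (negligible_no_fwd_return hX hstat k j n).
by move=> w [cy nE] [t tau]; apply: nE; exists t => //; rewrite shifted_tau_eventE.
Qed.

End ShiftedTau.

Theorem lemma1 (d : measure_display) (T : measurableType d) (R : realType)
  (P : probability T R) (A : finType) (X : int -> T -> A)
  (hmeas : forall (i : int) (a : A), measurable (X i @^-1` [set a]))
  (hstat : stationary P X)
  (k n j : nat) (hk : (0 < k)%N) (s : seq (int * A)) :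
  P [set w | exists t : nat, is_tau X k n w j t /\
               cyl (fun i => X (n%:Z - t%:Z + i)) s w]
  = P (cyl X s).
Proof.
rewrite bigcup_tau_event (measure_bigcup_congr (F := tau_event X k n j s)
  (G := shifted_tau_event X k n j s)).
- apply: eq_trans (measure_bigcup_shifted_tau_event hmeas hstat k n j s) _.
  have -> : (fun i => X (n%:Z + i)) = (fun i => X (i + n%:Z)).
    by apply: funext => i; rewrite addrC.
  exact: hstat.
- exact: measurable_tau_event.
- exact: measurable_shifted_tau_event.
- exact: trivIset_tau_event.
- exact: trivIset_shifted_tau_event.
- by move=> t; apply/esym/(measure_shifted_tau_event hmeas hstat).
Qed.
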